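(* Let $\{i,j,k\}=\{1,2,3\}$, let $S$ be a word directed toward $i$ and $T$ a word directed toward $j$ (with $i\neq j$). Then, up to applications of rule (8), the word $S^{-1}T$ has at most one factorization under the local algorithm $A$, and it is of the form $T_1S_1^{-1}$, where $S_1$ is directed toward $i$ and $T_1$ is directed toward $j$.
   Context: For distinct $a,b\in\{1,2,3\}$, $E_{ab}$ denotes the $3\times 3$ elementary matrix that differs from the identity by an entry $1$ at position $(a,b)$, and $E_{ab}^{-1}$ its inverse; for a permutation $(a,b,c)$ of $(1,2,3)$, $R_{abc}$ denotes the symbol of the cyclic permutation $r$ of indices with $c\mapsto b\mapsto a\mapsto c$. For a word $S=X_1\cdots X_n$ of letters $E_{ab}$, $S^{-1}=X_n^{-1}\cdots X_1^{-1}$. A word is directed toward $i$ if it consists only of letters $E_{ij}$ and $E_{ik}$ ($\{i,j,k\}=\{1,2,3\}$). Local algorithm $A$ acts on finite words by repeatedly replacing subwords by the rules (for $\{i,j,k\}=\{1,2,3\}$): (1) $E^{-1}_{ij}E_{ji}\Rightarrow$ stop; (2) $E^{-1}_{ij}E_{ij}\Rightarrow 1$; (3) $E^{-1}_{ij}E_{kj}\Rightarrow E_{kj}E^{-1}_{ij}$; (4) $E^{-1}_{ij}E_{jk}\Rightarrow E_{jk}E^{-1}_{ik}E^{-1}_{ij}$; (5) $E^{-1}_{ij}E_{ki}\Rightarrow E_{ki}E_{kj}E^{-1}_{ij}$; (6a) $E^{-1}_{ij}E_{ik}\Rightarrow E_{ik}E^{-1}_{ij}$ or alternatively (6b) $E^{-1}_{ij}E_{ik}\Rightarrow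 E_{ki}E_{jk}R_{kji}E^{-1}_{kj}E^{-1}_{ji}$; (7) $R_{kji}E_{lm}^{\pm1}\Rightarrow E_{r(l)r(m)}^{\pm1}R_{kji}$ with $r:i\mapsto j\mapsto k\mapsto i$. In addition the rule (8) $E_{ij}E_{ik}\Rightarrow E_{ik}E_{ij}$ may be used. Permutation symbols can be moved using rule (7). The order of places at which rules are applied is fixed; the only choices are between (6a) and (6b). A factorization of a word $W$ is the final word of a run of the algorithm on $W$ that terminates without applying rule (1), i.e. ends with a word $T'S'^{-1}$ where $T'$ contains no inverse letters and $S'$ consists of letters $E_{ab}$. *)

From Stdlib Require Import List Relations.
Import ListNotations.

Inductive idx : Type := i1 | i2 | i3.

Definition idx_eqb (x y : idx) : bool :=
  match x, y with
  | i1, i1 | i2, i2 | i3, i3 => true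
  | _, _ => false
  end.

(* E a b = E_ab ; Einv a b = E_ab^{-1} ; R a b c = R_abc, the symbol of the
   cyclic permutation c |-> b |-> a |-> c. *)
Inductive letter : Type :=
| E (a b : idx)
| Einv (a b : idx)
| R (a b c : idx).

Definition word := list letter.

Definition inv_letter (x : letter) : letter :=
  match x with
  | E a b => Einv a b
  | Einv a b => E a b
  | R a b c => R a b c
  end.
Definition inv_word (S : word) : word := rev (map inv_letter S).

(* the permutation r : i |-> j |-> k |-> i attached to R_kji *)
Definition cyc (k j i : idx) (x : idx) : idx :=
  if idx_eqb x i then j else if idx_eqb x j then k else i.

Definition distinct3 (i j k : idx) : Prop := i <> j /\ i <> k /\ j <> k.

(* Rules (2)-(7) of the local algorithm A (rule (1) = "stop" has no
   rewriting step), and rule (8). Each rule replaces a two-letter subword. *)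
Inductive rule_A : word -> word -> Prop :=
| rule2 i j k : distinct3 i j k ->
    rule_A [Einv i j; E i j] []
| rule3 i j k : distinct3 i j k ->
    rule_A [Einv i j; E k j] [E k j; Einv i j]
| rule4 i j k : distinct3 i j k ->
    rule_A [Einv i j; E j k] [E j k; Einv i k; Einv i j]
| rule5 i j k : distinct3 i j k ->
    rule_A [Einv i j; E k i] [E k i; E k j; Einv i j]
| rule6a i j k : distinct3 i j k ->
    rule_A [Einv i j; E i k] [E i k; Einv i j]
| rule6b i j k : distinct3 i j k ->
    rule_A [Einv i j; E i k] [E k i; E j k; R k j i; Einv k j; Einv j i]
| rule7E i j k l m : distinct3 i j k -> l <> m ->
    rule_A [R k j i; E l m] [E (cyc k j i l) (cyc k j i m); R k j i]
| rule7Einv i j k l m : distinct3 i j k -> l <> m ->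
    rule_A [R k j i; Einv l m] [Einv (cyc k j i l) (cyc k j i m); R k j i].

Inductive rule_8 : word -> word -> Prop :=
| rule8 i j k : distinct3 i j k ->
    rule_8 [E i j; E i k] [E i k; E i j].

Definition at_subword (r : word -> word -> Prop) (w w' : word) : Prop :=
  exists u v l l', r l l' /\ w = u ++ l ++ v /\ w' = u ++ l' ++ v.

Definition A_step (w w' : word) : Prop :=
  at_subword rule_A w w' \/ at_subword rule_8 w w'.

(* runs of A that never apply the stopping rule (1) *)
Definition A_reach : word -> word -> Prop := clos_refl_trans word A_step.

Definition equiv8 : word -> word -> Prop :=
  clos_refl_sym_trans word (at_subword rule_8).

Definition is_E (x : letter) : Prop := exists a b, x = E a b.
Definition not_inverse (x : letter) : Prop := forall a b, x <> Einv a b.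

Definition factorization (W F : word) : Prop :=
  A_reach W F /\
  exists T' S', F = T' ++ inv_word S' /\ Forall not_inverse T' /\ Forall is_E S'.

Definition directed (i : idx) (w : word) : Prop :=
  Forall (fun x => exists j, j <> i /\ x = E i j) w.

(* Every letter of [S^{-1} T] is some [E_jy] or [E_iy^{-1}], and the only rules
   applicable to words in this alphabet, (3), (4), (5) and (8), keep them in it.
   Pushing each letter [E_jy] leftwards through the inverse letters read before it
   defines a value of such words ([push]) that no rule changes.  On a word
   [T_1 S_1^{-1}] of the final shape this value records how many letters [E_ji]
   and [E_jk] occur in [T_1] and the whole sequence [S_1^{-1}]; as [T_1] is
   determined up to rule (8) by those two numbers, any two factorizations agree
   up to rule (8). *)

From Stdlib Require Import List Relations Lia Bool.
Import ListNotations.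

Lemma idx_eqbP x y : reflect (x = y) (idx_eqb x y).
Proof. destruct x, y; constructor; congruence. Qed.

Lemma idx_eqb_refl x : idx_eqb x x = true.
Proof. destruct x; reflexivity. Qed.

Lemma idx_eqb_neq x y : x <> y -> idx_eqb x y = false.
Proof. destruct (idx_eqbP x y); congruence. Qed.

Lemma distinct3_cases i j k y : distinct3 i j k -> y = i \/ y = j \/ y = k.
Proof. intros (? & ? & ?); destruct i, j, k, y; tauto || congruence. Qed.

Lemma distinct3_exists i j : i <> j -> exists k, distinct3 i j k.
Proof.
  intros Hij; destruct i, j; try congruence;
    [exists i3 | exists i2 | exists i3 | exists i1 | exists i2 | exists i1];
    repeat split; discriminate.
Qed.

Definition target (x : letter) : idx :=
  match x with E _ b | Einv _ b | R _ b _ => b end.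

Definition count_target (y : idx) (w : word) : nat :=
  length (filter (fun x => idx_eqb (target x) y) w).

Lemma count_target_cons y x w :
  count_target y (x :: w) = (if idx_eqb (target x) y then 1 else 0) + count_target y w.
Proof. unfold count_target; simpl; now destruct (idx_eqb (target x) y). Qed.

Lemma directed_target_inj a S1 S2 :
  directed a S1 -> directed a S2 -> map target S1 = map target S2 -> S1 = S2.
Proof.
  intros H1; revert S2.
  induction H1 as [|x S1 (y & _ & ->) _ IH]; intros S2 H2 Hmap;
    destruct H2 as [|x' S2 (y' & _ & ->) H2]; simpl in Hmap; try discriminate; auto.
  injection Hmap as -> Hmap; f_equal; auto.
Qed.

Lemma equiv8_app u v w w' : equiv8 w w' -> equiv8 (u ++ w ++ v) (u ++ w' ++ v).
Proof.
  induction 1 as [x y (u0 & v0 & l & l' & Hr & -> & ->) | x | x y _ IH | x y z _ IH1 _ IH2].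
  - apply rst_step; exists (u ++ u0), (v0 ++ v), l, l'.
    split; [exact Hr | split; now rewrite <- !app_assoc].
  - apply rst_refl.
  - now apply rst_sym.
  - now apply rst_trans with (u ++ y ++ v).
Qed.

Lemma equiv8_cons x w w' : equiv8 w w' -> equiv8 (x :: w) (x :: w').
Proof. intros H; generalize (equiv8_app [x] [] w w' H); now rewrite !app_nil_r. Qed.

Definition preserves {A} (P : letter -> bool) (f : A -> letter -> A) (w w' : word) : Prop :=
  forallb P w = true ->
  forallb P w' = true /\ forall s, fold_left f w s = fold_left f w' s.

Lemma preserves_at_subword {A} P (f : A -> letter -> A) (r : word -> word -> Prop) :
  (forall l l', r l l' -> preserves P f l l') ->
  forall w w', at_subword r w w' -> preserves P f w w'.
Proof.
  intros Hr w w' (u & v & l & l' & Hll' & -> & ->) Hw.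
  rewrite !forallb_app in *.
  apply andb_prop in Hw as [Hu Hw]; apply andb_prop in Hw as [Hl Hv].
  destruct (Hr l l' Hll' Hl) as [Hl' Hf].
  split; [now rewrite Hu, Hl', Hv |].
  intros s; now rewrite !fold_left_app, Hf.
Qed.

Lemma preserves_rt {A} P (f : A -> letter -> A) (step : relation word) :
  (forall w w', step w w' -> preserves P f w w') ->
  forall w w', clos_refl_trans word step w w' -> preserves P f w w'.
Proof.
  intros Hstep w w'; induction 1 as [x y H | x | x y z _ IH1 _ IH2]; auto.
  - intros Hx; split; auto.
  - intros Hx; destruct (IH1 Hx) as [Hy F1]; destruct (IH2 Hy) as [Hz F2].
    split; [exact Hz |]; intros s; now rewrite F1, F2.
Qed.

Definition admissible (i j : idx) (x : letter) : bool :=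
  match x with
  | E a b => idx_eqb a j && negb (idx_eqb b j)
  | Einv a b => idx_eqb a i && negb (idx_eqb b i)
  | R _ _ _ => false
  end.

Definition insert_before (j k : idx) (b : list idx) : list idx :=
  flat_map (fun y => if idx_eqb y j then [k; y] else [y]) b.
Arguments insert_before : simpl never.

Lemma insert_before_app j k b b' :
  insert_before j k (b ++ b') = insert_before j k b ++ insert_before j k b'.
Proof. apply flat_map_app. Qed.

Lemma insert_before_cons j k y b :
  insert_before j k (y :: b) = (if idx_eqb y j then [k; y] else [y]) ++ insert_before j k b.
Proof. reflexivity. Qed.

Lemma insert_before_id j k b : existsb (idx_eqb j) b = false -> insert_before j k b = b.
Proof.
  induction b as [|y b IH]; [reflexivity |]; simpl; intros [Hy Hb]%orb_false_iff.
  rewrite insert_before_cons, IH by exact Hb.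
  destruct (idx_eqbP y j); [subst; now rewrite idx_eqb_refl in Hy | reflexivity].
Qed.

Lemma existsb_insert_before j k b : k <> j ->
  existsb (idx_eqb j) (insert_before j k b) = existsb (idx_eqb j) b.
Proof.
  intros Hkj; induction b as [|y b IH]; [reflexivity |].
  rewrite insert_before_cons; destruct (idx_eqbP y j); simpl; rewrite IH;
    [subst; now rewrite idx_eqb_neq, idx_eqb_refl | reflexivity].
Qed.

Inductive state : Type := State (p q : nat) (b : list idx).

(* [push] reads a word left to right and moves each letter [E_jy] leftwards
   across the inverse letters [E_ib^{-1}] read so far, as rules (3)-(5) force:
   [E_ji] crosses [E_ik^{-1}] creating [E_jk] (rule 5) and cannot cross
   [E_ij^{-1}] (rule 1); [E_jk] crosses [E_ik^{-1}] (rule 3) and turns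
   [E_ij^{-1}] into [E_ik^{-1} E_ij^{-1}] (rule 4).  [State p q b] stands for
   [E_ji^p E_jk^q] (up to rule 8) followed by [E_{i b_1}^{-1} E_{i b_2}^{-1} ...];
   [None] means that rule (1) has become unavoidable. *)
Definition push (i j k : idx) (s : option state) (x : letter) : option state :=
  match s, x with
  | Some (State p q b), Einv _ y => Some (State p q (b ++ [y]))
  | Some (State p q b), E _ y =>
      if idx_eqb y i then
        if existsb (idx_eqb j) b then None else Some (State (S p) (q + length b) b)
      else Some (State p (S q) (insert_before j k b))
  | _, _ => None
  end.

Lemma rule_preserves i j k l l' : distinct3 i j k ->
  rule_A l l' \/ rule_8 l l' -> preserves (admissible i j) (push i j k) l l'.
Proof.
  intros (Hij & Hik & Hjk) Hr.
  destruct Hr as [[a b c D | a b c D | a b c D | a b c D | a b c D | a b c D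
                  | a b c x y D _ | a b c x y D _] | [a b c D]];
    intros Hl; try discriminate; destruct D as (? & ? & ?);
    destruct i, j, k; try congruence; destruct a, b, c; try congruence;
    try discriminate; split; try reflexivity;
    intros [[p q bl] |]; try reflexivity; simpl;
    rewrite ?insert_before_app, ?existsb_app, ?length_app, ?existsb_insert_before by discriminate;
    simpl; rewrite ?orb_false_r, <- ?app_assoc;
    try reflexivity;
    destruct (existsb (idx_eqb _) bl) eqn:Hbl; simpl; try reflexivity;
    rewrite ?(insert_before_id _ _ _ Hbl); f_equal; f_equal; lia.
Qed.

Lemma A_reach_preserves i j k w w' : distinct3 i j k ->
  A_reach w w' -> preserves (admissible i j) (push i j k) w w'.
Proof.
  intros Hijk; apply preserves_rt; intros u u' [Hstep | Hstep];
    revert u u' Hstep; apply preserves_at_subword; intros l l' Hr;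
    apply rule_preserves; auto.
Qed.

Lemma push_inv_word i j k a S p q b : directed a S ->
  fold_left (push i j k) (inv_word S) (Some (State p q b)) =
  Some (State p q (b ++ rev (map target S))).
Proof.
  intros HS; induction HS as [|x S (y & _ & ->) _ IH]; simpl.
  - now rewrite app_nil_r.
  - unfold inv_word in *; simpl; rewrite fold_left_app, IH; simpl.
    now rewrite app_assoc.
Qed.

Section Factorizations.
Variables i j k : idx.
Hypothesis Hijk : distinct3 i j k.

Lemma push_directed T p q : directed j T ->
  fold_left (push i j k) T (Some (State p q [])) =
  Some (State (p + count_target i T) (q + count_target k T) []).
Proof.
  destruct Hijk as (_ & Hik & _).
  intros HT; revert p q; induction HT as [|x T (y & Hy & ->) _ IH]; intros p q; simpl.
  - unfold count_target; simpl; now rewrite <- !plus_n_O.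
  - rewrite !count_target_cons; simpl.
    destruct (distinct3_cases i j k y Hijk) as [-> | [-> | ->]]; [| congruence |].
    + rewrite idx_eqb_refl, (idx_eqb_neq i k), IH by exact Hik; simpl.
      f_equal; f_equal; lia.
    + rewrite (idx_eqb_neq k i), idx_eqb_refl, IH by congruence; simpl.
      f_equal; f_equal; lia.
Qed.

Lemma equiv8_E_swap_repeat m Z :
  equiv8 (E j k :: repeat (E j i) m ++ Z) (repeat (E j i) m ++ E j k :: Z).
Proof.
  destruct Hijk as (Hij & Hik & Hjk).
  induction m as [|m IH]; simpl; [apply rst_refl |].
  apply rst_trans with (E j i :: E j k :: repeat (E j i) m ++ Z).
  - apply rst_step; exists [], (repeat (E j i) m ++ Z), [E j k; E j i], [E j i; E j k].
    split; [| split; reflexivity].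
    apply (rule8 j k i); repeat split; congruence.
  - now apply equiv8_cons.
Qed.

Lemma directed_sort T : directed j T ->
  equiv8 T (repeat (E j i) (count_target i T) ++ repeat (E j k) (count_target k T)).
Proof.
  destruct Hijk as (_ & Hik & _).
  induction 1 as [|x T (y & Hy & ->) _ IH]; [apply rst_refl |].
  apply rst_trans with (E j y :: repeat (E j i) (count_target i T) ++
                                  repeat (E j k) (count_target k T));
    [now apply equiv8_cons |].
  rewrite !count_target_cons; simpl.
  destruct (distinct3_cases i j k y Hijk) as [-> | [-> | ->]]; [| congruence |].
  - rewrite idx_eqb_refl, (idx_eqb_neq i k) by exact Hik; apply rst_refl.
  - rewrite (idx_eqb_neq k i), idx_eqb_refl by congruence; apply equiv8_E_swap_repeat.
Qed.

Lemma directed_admissible S T : directed i S -> directed j T ->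
  forallb (admissible i j) (inv_word S ++ T) = true.
Proof.
  intros HS HT; apply forallb_forall; intros x [Hx | Hx]%in_app_or.
  - apply in_rev, in_map_iff in Hx as (z & <- & Hz).
    destruct (proj1 (Forall_forall _ _) HS z Hz) as (y & Hy & ->); simpl.
    now rewrite idx_eqb_refl, idx_eqb_neq.
  - destruct (proj1 (Forall_forall _ _) HT x Hx) as (y & Hy & ->); simpl.
    now rewrite idx_eqb_refl, idx_eqb_neq.
Qed.

Lemma admissible_not_inverse_directed T : forallb (admissible i j) T = true ->
  Forall not_inverse T -> directed j T.
Proof.
  intros Ha HT; apply Forall_forall; intros x Hx.
  rewrite forallb_forall in Ha; specialize (Ha x Hx).
  destruct x as [a b | a b | a b c]; simpl in Ha; try discriminate.
  - apply andb_prop in Ha as [Ha Hb]; destruct (idx_eqbP a j), (idx_eqbP b j);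
      try discriminate; subst; eauto.
  - exfalso; exact (proj1 (Forall_forall _ _) HT _ Hx a b eq_refl).
Qed.

Lemma admissible_inv_word_directed S : forallb (admissible i j) (inv_word S) = true ->
  Forall is_E S -> directed i S.
Proof.
  intros Ha HS; apply Forall_forall; intros z Hz.
  destruct (proj1 (Forall_forall _ _) HS z Hz) as (a & b & ->).
  assert (Hin : In (Einv a b) (inv_word S))
    by (unfold inv_word; rewrite <- in_rev, in_map_iff; now exists (E a b)).
  rewrite forallb_forall in Ha; specialize (Ha _ Hin); simpl in Ha.
  apply andb_prop in Ha as [Ha Hb]; destruct (idx_eqbP a i), (idx_eqbP b i);
    try discriminate; subst; eauto.
Qed.

Lemma factorization_directed S T F : directed i S -> directed j T ->
  factorization (inv_word S ++ T) F ->
  exists T1 S1, F = T1 ++ inv_word S1 /\ directed j T1 /\ directed i S1 /\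
    fold_left (push i j k) F (Some (State 0 0 [])) =
    fold_left (push i j k) (inv_word S ++ T) (Some (State 0 0 [])).
Proof.
  intros HS HT [Hreach (T1 & S1 & -> & HT1 & HS1)].
  destruct (A_reach_preserves i j k _ _ Hijk Hreach (directed_admissible S T HS HT))
    as [Hadm Hfold].
  rewrite forallb_app in Hadm; apply andb_prop in Hadm as [HaT HaS].
  exists T1, S1; repeat split.
  - exact (admissible_not_inverse_directed T1 HaT HT1).
  - exact (admissible_inv_word_directed S1 HaS HS1).
  - now rewrite Hfold.
Qed.

Lemma equiv8_of_push_eq T1 S1 T2 S2 :
  directed j T1 -> directed i S1 -> directed j T2 -> directed i S2 ->
  fold_left (push i j k) (T1 ++ inv_word S1) (Some (State 0 0 [])) =
  fold_left (push i j k) (T2 ++ inv_word S2) (Some (State 0 0 [])) ->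
  equiv8 (T1 ++ inv_word S1) (T2 ++ inv_word S2).
Proof.
  intros HT1 HS1 HT2 HS2 Hfold.
  rewrite !fold_left_app, (push_directed T1), (push_directed T2),
    (push_inv_word _ _ _ i S1), (push_inv_word _ _ _ i S2) in Hfold by assumption.
  injection Hfold as Hi Hk Htargets.
  apply (f_equal (@rev idx)) in Htargets; rewrite !rev_involutive in Htargets.
  rewrite (directed_target_inj i S1 S2 HS1 HS2 Htargets).
  apply (equiv8_app [] _ T1 T2).
  apply rst_trans with (repeat (E j i) (count_target i T1) ++ repeat (E j k) (count_target k T1));
    [now apply directed_sort |].
  rewrite Hi, Hk; apply rst_sym; now apply directed_sort.
Qed.

End Factorizations.

Theorem proposition3p1 (i j : idx) (Hij : i <> j) (S T : word)
  (HS : directed i S) (HT : directed j T) :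
  (forall F1 F2, factorization (inv_word S ++ T) F1 ->
     factorization (inv_word S ++ T) F2 -> equiv8 F1 F2) /\
  (forall F, factorization (inv_word S ++ T) F ->
     exists T1 S1, F = T1 ++ inv_word S1 /\ directed j T1 /\ directed i S1).
Proof.
  destruct (distinct3_exists i j Hij) as [k Hijk].
  split.
  - intros F1 F2 HF1 HF2.
    destruct (factorization_directed i j k Hijk S T F1 HS HT HF1)
      as (T1 & S1 & -> & HT1 & HS1 & Hfold1).
    destruct (factorization_directed i j k Hijk S T F2 HS HT HF2)
      as (T2 & S2 & -> & HT2 & HS2 & Hfold2).
    apply (equiv8_of_push_eq i j k); try assumption.
    now rewrite Hfold1, Hfold2.
  - intros F HF.
    destruct (factorization_directed i j k Hijk S T F HS HT HF)
      as (T1 & S1 & -> & HT1 & HS1 & _).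
    now exists T1, S1.
Qed.
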